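(* Let $p$ be a prime and $G$ a finite group with $p\nmid |G|$. If $G$ acts by isometries on a nondegenerate lattice $L$ with $p\nmid\det(L)$, then $p\nmid \det(L^G)\det(L_G)$.
   Context: $L^G=\{l\in L: g(l)=l\ \forall g\in G\}$ is the invariant sublattice and $L_G=(L^G)^\perp\subset L$ the coinvariant sublattice. *)

From mathcomp Require Import all_boot all_order all_algebra all_fingroup.
Set Implicit Arguments. Unset Strict Implicit. Unset Printing Implicit Defensive.
Import GRing.Theory Num.Theory.
Local Open Scope ring_scope.

(* A lattice L = Z^n (row vectors 'rV[int]_n) with integral symmetric bilinear
   form b(u,v) = u *m B *m v^T given by a Gram matrix B. *)

Definition bil (n : nat) (B : 'M[int]_n) (u v : 'rV[int]_n) : int :=
  (u *m B *m v^T) 0 0.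

(* G acts on L (on the right, v |-> v *m rho g) by isometries of B. *)
Definition isometric_action (gT : finGroupType) (G : {group gT}) (n : nat)
  (B : 'M[int]_n) (rho : gT -> 'M[int]_n) : Prop :=
  [/\ rho 1%g = 1%:M,
      {in G &, forall x y, rho (x * y)%g = rho x *m rho y} &
      {in G, forall g, rho g *m B *m (rho g)^T = B}].

Definition invariant_sublattice (gT : finGroupType) (G : {group gT}) (n : nat)
  (rho : gT -> 'M[int]_n) (v : 'rV[int]_n) : Prop :=
  forall g, g \in G -> v *m rho g = v.

Definition orth_sublattice (n : nat) (B : 'M[int]_n)
  (S : 'rV[int]_n -> Prop) (v : 'rV[int]_n) : Prop :=
  forall w, S w -> bil B v w = 0.

Definition is_basis (n k : nat) (S : 'rV[int]_n -> Prop) (M : 'M[int]_(k, n)) : Prop :=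
  (forall c : 'rV[int]_k, c *m M = 0 -> c = 0) /\
  (forall v, S v <-> exists c : 'rV[int]_k, v = c *m M).

Definition gram_det (n k : nat) (B : 'M[int]_n) (M : 'M[int]_(k, n)) : int :=
  \det (M *m B *m M^T).

From mathcomp Require Import all_boot all_order all_algebra all_fingroup.
Set Implicit Arguments. Unset Strict Implicit. Unset Printing Implicit Defensive.
Import GRing.Theory Num.Theory.
Local Open Scope ring_scope.

(* With P = \sum_(g in G) rho g and a = |G|, the rows of P lie in L^G and
   those of a - P in L_G, so a = A1 M1 + A2 M2 for integral A1, A2, and
   M1 A1 = M2 A2 = a.  Given such a splitting, A1^T (adj B) A1 is an inverse
   of the Gram matrix M1 B M1^T up to the scalar a^2 det B, so det(L^G)
   divides a power of a^2 det B, which p does not divide; likewise for L_G. *)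

Lemma gram_mulmx_adj (R : comPzRingType) (n k k' : nat) (B : 'M[R]_n)
    (M : 'M_(k, n)) (A : 'M_(n, k)) (M' : 'M_(k', n)) (A' : 'M_(n, k')) (a : R) :
  M *m A = a%:M -> A *m M + A' *m M' = a%:M -> M *m B *m M'^T = 0 ->
  M *m B *m M^T *m (A^T *m \adj B *m A) = (a ^+ 2 * \det B)%:M.
Proof.
move=> MA splitA orthM.
have MBMA : M *m B *m M^T *m A^T = a *: (M *m B).
  rewrite -mulmxA -trmx_mul -[A *m M](addrK (A' *m M')) splitA.
  rewrite linearB /= tr_scalar_mx mulmxBr mul_mx_scalar trmx_mul mulmxA orthM.
  by rewrite mul0mx subr0.
rewrite !mulmxA MBMA -!scalemxAl -(mulmxA M) mul_mx_adj mul_mx_scalar.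
by rewrite -scalemxAl MA !scale_scalar_mx mulrCA mulrC expr2.
Qed.

Lemma gram_det_dvd (n k k' : nat) (B : 'M[int]_n)
    (M : 'M_(k, n)) (A : 'M_(n, k)) (M' : 'M_(k', n)) (A' : 'M_(n, k')) (a : int) :
  M *m A = a%:M -> A *m M + A' *m M' = a%:M -> M *m B *m M'^T = 0 ->
  (gram_det B M %| (a ^+ 2 * \det B) ^+ k)%Z.
Proof.
move=> MA splitA orthM; apply/dvdzP; exists (\det (A^T *m \adj B *m A)).
by rewrite [RHS]mulrC -det_mulmx (gram_mulmx_adj MA splitA orthM) det_scalar.
Qed.

Lemma mulmx_det_neq0_eq0 (R : idomainType) (m n : nat) (B : 'M[R]_n)
    (X : 'M_(m, n)) :
  \det B != 0 -> X *m B = 0 -> X = 0.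
Proof.
move=> detB XB; apply/eqP; rewrite -[X == 0]orFb -(negPf detB) -scalemx_eq0.
by rewrite -mul_mx_scalar -mul_mx_adj mulmxA XB mul0mx.
Qed.

Section Bases.

Variables (n k : nat) (S : 'rV[int]_n -> Prop) (M : 'M[int]_(k, n)).
Hypothesis basisM : is_basis S M.

Lemma basis_row i : S (row i M).
Proof. by apply/(proj2 basisM); exists 'e_i; rewrite rowE. Qed.

Lemma basis_rows_span (k' : nat) (X : 'M[int]_(k', n)) :
  (forall i, S (row i X)) -> exists C : 'M_(k', k), X = C *m M.
Proof.
move=> SX; have [c Xc] := fin_all_exists (fun i => proj1 (proj2 basisM _) (SX i)).
by exists (\matrix_i c i); apply/row_matrixP => i; rewrite row_mul rowK -Xc.
Qed.

Lemma basis_mulmx_eq0 (k' : nat) (C : 'M[int]_(k', k)) : C *m M = 0 -> C = 0.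
Proof.
move=> CM; apply/row_matrixP => i; rewrite row0; apply: (proj1 basisM).
by rewrite -row_mul CM row0.
Qed.

Lemma orth_sublatticeP (B : 'M[int]_n) v :
  orth_sublattice B S v <-> v *m B *m M^T = 0.
Proof.
split=> [orth_v | vBM w /(proj2 basisM) [c ->]]; last first.
  by rewrite /bil trmx_mul mulmxA vBM mul0mx mxE.
apply/rowP => j; rewrite [RHS]mxE -(orth_v _ (basis_row j)) /bil.
by rewrite tr_row colE mulmxA -colE [RHS]mxE.
Qed.

End Bases.

Section GroupSum.

Variables (gT : finGroupType) (G : {group gT}) (n : nat).
Variables (B : 'M[int]_n) (rho : gT -> 'M[int]_n).
Hypothesis act : isometric_action G B rho.

Local Notation P := (\sum_(g in G) rho g).
Local Notation a := (#|G|%:R : int).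

Lemma invariant_rowsP (k : nat) (X : 'M[int]_(k, n)) :
  (forall i, invariant_sublattice G rho (row i X)) <->
  (forall g, g \in G -> X *m rho g = X).
Proof.
split=> [invX g gG | XG i g gG]; last by rewrite -row_mul XG.
by apply/row_matrixP => i; rewrite row_mul invX.
Qed.

Lemma rho_mulmxB g : g \in G -> rho g *m B = B *m (rho g^-1)^T.
Proof.
case: act => rho1 rhoM rhoB gG.
rewrite -{2}(rhoB g gG) -!mulmxA -trmx_mul -rhoM ?groupV // mulVg rho1.
by rewrite trmx1 mulmx1.
Qed.

Lemma sum_mulmxB : P *m B = B *m P^T.
Proof.
rewrite mulmx_suml (eq_bigr _ (fun g gG => rho_mulmxB gG)) linear_sum mulmx_sumr.
rewrite (reindex_inj invg_inj) /= (eq_bigl _ _ (fun g => groupV G g)).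
by apply: eq_bigr => g _; rewrite invgK.
Qed.

Lemma sum_mulmx_rho h : h \in G -> P *m rho h = P.
Proof.
case: act => _ rhoM _ hG; rewrite mulmx_suml.
rewrite (eq_bigr (fun g => rho (g * h)%g)) => [|g gG]; last by rewrite rhoM.
by rewrite [RHS](reindex_astabs 'R h) ?astabsR.
Qed.

Lemma invariant_mulmx_sum (k : nat) (X : 'M[int]_(k, n)) :
  (forall g, g \in G -> X *m rho g = X) -> X *m P = a *: X.
Proof.
move=> XG; rewrite mulmx_sumr (eq_bigr _ XG).
by rewrite sumr_const scaler_nat.
Qed.

Variables (k1 k2 : nat) (M1 : 'M[int]_(k1, n)) (M2 : 'M[int]_(k2, n)).
Hypotheses (Bsym : B^T = B) (detB : \det B != 0).
Hypothesis basis1 : is_basis (invariant_sublattice G rho) M1.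
Hypothesis basis2 : is_basis (orth_sublattice B (invariant_sublattice G rho)) M2.

Lemma orth_invariant_gram : M2 *m B *m M1^T = 0.
Proof.
apply/row_matrixP => i; rewrite row0 !row_mul.
exact/(orth_sublatticeP basis1)/(basis_row basis2).
Qed.

Lemma invariant_orth_gram : M1 *m B *m M2^T = 0.
Proof.
by apply: trmx_inj; rewrite trmx0 !trmx_mul trmxK Bsym mulmxA orth_invariant_gram.
Qed.

Lemma invariant_orth_split :
  exists (A1 : 'M_(n, k1)) (A2 : 'M_(n, k2)),
    [/\ M1 *m A1 = a%:M, M2 *m A2 = a%:M & A1 *m M1 + A2 *m M2 = a%:M].
Proof.
have M1G : forall g, g \in G -> M1 *m rho g = M1.
  exact/invariant_rowsP/(basis_row basis1).
have [A1 PA1] : exists A1, P = A1 *m M1.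
  apply: (basis_rows_span basis1); apply/invariant_rowsP => h hG.
  exact: sum_mulmx_rho.
have [A2 PA2] : exists A2, a%:M - P = A2 *m M2.
  apply: (basis_rows_span basis2) => i; apply/(orth_sublatticeP basis1).
  rewrite -!row_mul mulmxBl sum_mulmxB mulmxBl -[B *m _ *m _]mulmxA -trmx_mul.
  rewrite invariant_mulmx_sum // linearZ /= mul_scalar_mx -scalemxAl scalemxAr.
  by rewrite subrr row0.
have M2P : M2 *m P = 0.
  apply: (mulmx_det_neq0_eq0 detB).
  by rewrite -mulmxA sum_mulmxB mulmxA PA1 trmx_mul mulmxA orth_invariant_gram mul0mx.
exists A1, A2; split; last by rewrite -PA1 -PA2 addrC subrK.
- apply/subr0_eq/(basis_mulmx_eq0 basis1).
  by rewrite mulmxBl -mulmxA -PA1 invariant_mulmx_sum // mul_scalar_mx subrr.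
- apply/subr0_eq/(basis_mulmx_eq0 basis2).
  by rewrite mulmxBl -mulmxA -PA2 mulmxBr M2P subr0 mul_mx_scalar mul_scalar_mx subrr.
Qed.

End GroupSum.

Lemma prime_ndvdz_gram_det (p n k k' : nat) (B : 'M[int]_n)
    (M : 'M_(k, n)) (A : 'M_(n, k)) (M' : 'M_(k', n)) (A' : 'M_(n, k')) (a : int) :
  prime p -> ~~ (p%:Z %| a)%Z -> ~~ (p%:Z %| \det B)%Z ->
  M *m A = a%:M -> A *m M + A' *m M' = a%:M -> M *m B *m M'^T = 0 ->
  ~~ (p%:Z %| gram_det B M)%Z.
Proof.
move=> pp pa pB MA splitA orthM; apply/negP => pM.
have := dvdz_trans pM (gram_det_dvd MA splitA orthM).
move: pa pB; rewrite !dvdzE !(abszX, abszM, absz_nat).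
by rewrite Euclid_dvdX // Euclid_dvdM // Euclid_dvdX // => /negPf-> /negPf->.
Qed.

Theorem lemma8p1 (p : nat) (gT : finGroupType) (G : {group gT}) (n : nat)
  (B : 'M[int]_n) (rho : gT -> 'M[int]_n) :
  prime p -> ~~ (p %| #|G|)%N ->
  B^T = B -> \det B != 0 -> ~~ (p%:Z %| \det B)%Z ->
  isometric_action G B rho ->
  forall (k1 k2 : nat) (M1 : 'M[int]_(k1, n)) (M2 : 'M[int]_(k2, n)),
    is_basis (invariant_sublattice G rho) M1 ->
    is_basis (orth_sublattice B (invariant_sublattice G rho)) M2 ->
    ~~ (p%:Z %| gram_det B M1 * gram_det B M2)%Z.
Proof.
move=> pp pG Bsym detB pB act k1 k2 M1 M2 basis1 basis2.
have [A1 [A2 [M1A1 M2A2 splitA]]] := invariant_orth_split act detB basis1 basis2.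
have orth12 := invariant_orth_gram Bsym basis1 basis2.
have orth21 := orth_invariant_gram basis1 basis2.
have pa : ~~ (p%:Z %| #|G|%:R)%Z by rewrite dvdzE natz !absz_nat.
have p1 := prime_ndvdz_gram_det pp pa pB M1A1 splitA orth12.
have p2 := prime_ndvdz_gram_det pp pa pB M2A2 (etrans (addrC _ _) splitA) orth21.
by rewrite dvdzE abszM Euclid_dvdM // -!dvdzE negb_or p1 p2.
Qed.
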